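(* Let $T=(V,E)$ be a finite rooted tree with nonnegative partial costs, $\Pr$ a probability distribution over a finite set of queries, and $k$ a positive integer with $k\le|V|$. Let $R_g$ be the output of the greedy algorithm that starts with $R=\emptyset$ and, while $|R|<k$, adds to $R$ a node $u\in V\setminus R$ maximizing $B(R\cup\{u\})-B(R)$. Then $$B(R_g)\ge\Big(1-\frac1e\Big)\max_{R\subseteq V,\ |R|\le k}B(R).$$
   Context: $T=(V,E)$ is a finite rooted tree; $T(u)$ is the set of nodes of the subtree rooted at $u$ (including $u$); $A(u)$ the set of proper ancestors of $u$. Each non-leaf node is associated with a variable of a finite set $X$; $\mathrm{vars}(u)$ is the set of variables of nodes of $T(u)$; each query $q$ determines $Z_q\subseteq X$. For $R\subseteq V$, $w\in V$: $I_q(w,R)=1$ iff $w\in R$, $\mathrm{vars}(w)\subseteq Z_q$, and no $x\in A(w)\cap R$ has $\mathrm{vars}(x)\subseteq Z_q$; else $0$; $\mathbb{E}[I(w,R)]=\sum_q\Pr(q)I_q(w,R)$. Each node $x$ has partial cost $c(x)\ge0$, total cost $C(w)=\sum_{x\in T(w)}c(x)$. Benefit: $B(R)=\sum_{w\in R}\mathbb{E}[I(w,R)]C(w)$. *)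

From HB Require Import structures.
From mathcomp Require Import all_boot all_order all_algebra.
From mathcomp Require Import reals.
From mathcomp Require Import sequences.
Set Implicit Arguments. Unset Strict Implicit. Unset Printing Implicit Defensive.
Import Order.TTheory GRing.Theory Num.Theory.
Local Open Scope ring_scope.

Section Defs.
Variable V : finType.

Definition is_rooted_tree (r : V) (par : V -> V) : Prop :=
  par r = r /\ forall v : V, exists n : nat, iter n par v = r.

Definition subtree (par : V -> V) (u : V) : {set V} :=
  [set w | fconnect par w u].

Definition ancestors (par : V -> V) (u : V) : {set V} :=
  [set x | fconnect par u x & x != u].

Definition is_leaf (par : V -> V) (u : V) : bool :=
  ~~ [exists w, (w != u) && (par w == u)].

Variable X : finType.

Definition vars (par : V -> V) (var : V -> X) (u : V) : {set X} :=
  [set var x | x in [set x in subtree par u | ~~ is_leaf par x]].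

Variable Q : finType.
Variable R : realType.

Definition Iq (par : V -> V) (var : V -> X) (Z : Q -> {set X})
    (q : Q) (w : V) (S : {set V}) : bool :=
  [&& w \in S, vars par var w \subset Z q &
      ~~ [exists x in ancestors par w :&: S, vars par var x \subset Z q]].

Definition EI (par : V -> V) (var : V -> X) (Z : Q -> {set X}) (P : Q -> R)
    (w : V) (S : {set V}) : R :=
  \sum_(q : Q) P q * (Iq par var Z q w S)%:R.

Definition Ctot (par : V -> V) (c : V -> R) (w : V) : R :=
  \sum_(x in subtree par w) c x.

Definition benefit (par : V -> V) (var : V -> X) (Z : Q -> {set X})
    (P : Q -> R) (c : V -> R) (S : {set V}) : R :=
  \sum_(w in S) EI par var Z P w S * Ctot par c w.

(* Ties may be broken arbitrarily. *)
Definition greedy_run (B : {set V} -> R) (s : seq V) : Prop :=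
  forall (p : seq V) (u : V) (t : seq V), s = p ++ u :: t ->
    let Ri := [set x in p] in
    u \notin Ri /\
    forall v : V, v \notin Ri -> B (v |: Ri) - B Ri <= B (u |: Ri) - B Ri.
End Defs.

From HB Require Import structures.
From mathcomp Require Import all_boot all_order all_algebra.
From mathcomp Require Import reals sequences exp lra.
Import Order.TTheory GRing.Theory Num.Theory.
Local Open Scope ring_scope.
Set Implicit Arguments. Unset Strict Implicit. Unset Printing Implicit Defensive.

(* In a rooted tree, the nodes w of R with I_q(w, R) = 1 are the topmost nodes
   of R whose variables lie in Z_q, so every node x lies below at most one of
   them, and below exactly one as soon as it lies below some node of R whose
   variables lie in Z_q.  Hence B(R) = sum_q Pr(q) sum_x c(x) [x is covered by R
   for q] is a weighted coverage function: nonnegative, monotone and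
   submodular.  For such functions each greedy step closes at least a 1/k
   fraction of the gap to any set of at most k nodes, so after k steps the gap
   is at most (1 - 1/k)^k <= 1/e of its value. *)

Section Iteration.
Variables (T : finType) (f : T -> T).

Lemma fconnect_total x a b : fconnect f x a -> fconnect f x b ->
  fconnect f a b || fconnect f b a.
Proof.
move=> /iter_findex <- /iter_findex <-.
have [le_ab|/ltnW le_ba] := leqP (findex f x a) (findex f x b).
  by rewrite -(subnK le_ab) iterD fconnect_iter.
by rewrite -(subnK le_ba) iterD fconnect_iter orbT.
Qed.

End Iteration.

Section RootedTree.
Variables (V : finType) (r : V) (par : V -> V).
Hypothesis tree : is_rooted_tree r par.

Lemma iter_root n : iter n par r = r.
Proof. by case: tree => par_r _; elim: n => //= n ->. Qed.

Lemma periodic_root a n : iter n.+1 par a = a -> a = r.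
Proof.
move=> per; have [_ /(_ a) [N a_to_r]] := tree.
have perM j : iter (j * n.+1) par a = a.
  by elim: j => [|j IH] //; rewrite mulSn iterD IH per.
by rewrite -(perM N) -(subnK (leq_pmulr N (ltn0Sn n))) iterD a_to_r iter_root.
Qed.

Lemma fconnect_antisym a b : fconnect par a b -> fconnect par b a -> a = b.
Proof.
move=> /iter_findex ab /iter_findex ba.
have cyc : iter (findex par b a + findex par a b) par a = a by rewrite iterD ab.
case E : (findex par b a + findex par a b)%N cyc => [|n] cyc.
  by move/eqP: E; rewrite addn_eq0 => /andP [_ /eqP ab0]; rewrite -ab ab0.
by rewrite -ab (periodic_root cyc) iter_root.
Qed.

End RootedTree.

Section Coverage.
Variables (R : numDomainType) (V I : finType) (w : I -> R) (p : I -> V -> bool).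
Hypothesis w_ge0 : forall i, 0 <= w i.

Definition covered i (A : {set V}) := [exists v in A, p i v].

Definition coverage (A : {set V}) : R := \sum_(i : I) w i * (covered i A)%:R.

Lemma covered_subset i (A B : {set V}) :
  A \subset B -> covered i A -> covered i B.
Proof.
by move=> /subsetP AB /existsP [v /andP [vA piv]]; apply/existsP; exists v; rewrite AB.
Qed.

Lemma coverage_set0 : coverage set0 = 0.
Proof.
rewrite /coverage big1 // => i _.
suff -> : covered i set0 = false by rewrite mulr0.
by apply/existsP => -[v]; rewrite inE.
Qed.

Lemma coverage_mono (A B : {set V}) : A \subset B -> coverage A <= coverage B.
Proof.
move=> AB; apply: ler_sum => i _; apply: ler_wpM2l => //.
by have [/(covered_subset AB) ->|] := boolP (covered i A).
Qed.

Lemma covered_marginal_subadd i (A B : {set V}) :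
  (covered i (A :|: B))%:R - (covered i A)%:R
    <= \sum_(v in B) ((covered i (v |: A))%:R - (covered i A)%:R) :> R.
Proof.
have [covA|uncovA] := boolP (covered i A).
  rewrite (covered_subset (subsetUl A B) covA) subrr big1 // => v _.
  by rewrite (covered_subset (subsetUr _ A) covA) subrr.
under eq_bigr do rewrite subr0.
rewrite subr0; have [/existsP [v /andP [vAB piv]]|] := boolP (covered i (A :|: B));
  last by rewrite sumr_ge0.
have vB : v \in B.
  by move: vAB; rewrite inE => /orP [vA|//]; case/existsP: uncovA; exists v; rewrite vA.
have covvA : covered i (v |: A) by apply/existsP; exists v; rewrite setU11.
by rewrite (bigD1 v) //= covvA lerDl sumr_ge0.
Qed.

Lemma coverage_marginal_subadd (A B : {set V}) :
  coverage (A :|: B) - coverage A <= \sum_(v in B) (coverage (v |: A) - coverage A).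
Proof.
rewrite /coverage -sumrB.
under [X in _ <= X]eq_bigr do rewrite -sumrB.
rewrite exchange_big /=; apply: ler_sum => i _.
rewrite -mulrBr -(eq_bigr _ (fun v _ => mulrBr _ _ _)) -mulr_sumr.
by rewrite ler_wpM2l ?covered_marginal_subadd.
Qed.

End Coverage.

Section BenefitCoverage.
Variables (V X Q : finType) (R : realType).
Variables (r : V) (par : V -> V) (var : V -> X) (Z : Q -> {set X}).
Variables (P : Q -> R) (c : V -> R).
Hypothesis tree : is_rooted_tree r par.

Definition usable q w := vars par var w \subset Z q.

Definition covers (i : Q * V) w := usable i.1 w && (i.2 \in subtree par w).

Lemma Iq_subtree_unique q x (S : {set V}) w1 w2 :
  Iq par var Z q w1 S -> Iq par var Z q w2 S ->
  x \in subtree par w1 -> x \in subtree par w2 -> w1 = w2.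
Proof.
wlog w1w2 : w1 w2 / fconnect par w1 w2.
  move=> wlog_w I1 I2 x1 x2; move: (x1) (x2); rewrite !inE => x_w1 x_w2.
  case/orP: (fconnect_total x_w1 x_w2) => [w1w2 | w2w1]; first exact: wlog_w.
  by symmetry; apply: wlog_w.
move=> /and3P [_ _ top1] /and3P [w2S usable2 _] _ _.
apply/eqP; apply: contraNT top1 => w1_neq_w2.
by apply/existsP; exists w2; rewrite !inE w1w2 eq_sym w1_neq_w2 w2S usable2.
Qed.

Lemma Iq_subtree_exists q x (S : {set V}) : covered covers (q, x) S ->
  exists2 w, Iq par var Z q w S & x \in subtree par w.
Proof.
move=> /existsP [w0 w0C].
have [w wC wmax] := @arg_maxnP _ w0 (fun w => (w \in S) && covers (q, x) w)
  (fun w => #|subtree par w|) w0C.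
move: (wC) => /andP [wS /andP /= [usable_w xw]].
exists w => //; apply/and3P; split => //.
apply/existsP => -[a /andP [/setIP [+ aS] usable_a]]; rewrite inE => /andP [wa a_neq_w].
have aC : (a \in S) && covers (q, x) a.
  by rewrite aS /covers /usable usable_a inE (connect_trans _ wa) //; rewrite inE in xw.
have := wmax a aC; rewrite /= leqNgt => /negP; apply; apply: proper_card.
apply/properP; split.
  by apply/subsetP => y; rewrite !inE => yw; apply: connect_trans yw wa.
exists a; first by rewrite inE connect0.
by rewrite inE; apply: contra a_neq_w => aw; rewrite (fconnect_antisym tree wa aw).
Qed.

Lemma sum_Iq_subtree q x (S : {set V}) :
  \sum_(w in S) ((Iq par var Z q w S && (x \in subtree par w))%:R : R)
    = (covered covers (q, x) S)%:R.
Proof.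
have [covS|uncovS] := boolP (covered covers (q, x) S).
  have [w Iw xw] := Iq_subtree_exists covS.
  have wS : w \in S by case/and3P: Iw.
  rewrite (bigD1 w) //= Iw xw big1 ?addr0 // => v /andP [_ v_neq_w].
  apply/eqP; rewrite pnatr_eq0 eqb0; apply: contra v_neq_w => /andP [Iv xv].
  by rewrite (Iq_subtree_unique Iv Iw xv xw).
rewrite big1 // => w wS; apply/eqP; rewrite pnatr_eq0 eqb0.
apply: contra uncovS => /andP [/and3P [_ usable_w _] xw].
by apply/existsP; exists w; rewrite wS /covers /usable usable_w.
Qed.

Lemma benefit_coverage S :
  benefit par var Z P c S = coverage (fun i => P i.1 * c i.2) covers S.
Proof.
rewrite /coverage -(pair_bigA _ (fun q x => P q * c x * (covered covers (q, x) S)%:R)) /=.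
transitivity (\sum_q \sum_x \sum_(w in S)
    P q * c x * (Iq par var Z q w S && (x \in subtree par w))%:R).
  rewrite /benefit; under eq_bigr do rewrite /EI mulr_suml.
  rewrite exchange_big; apply: eq_bigr => q _.
  rewrite [RHS]exchange_big; apply: eq_bigr => w _.
  rewrite /Ctot big_mkcond mulr_sumr; apply: eq_bigr => x _.
  by case: (x \in _); case: Iq; rewrite /= ?mulr1 ?mulr0 ?mul0r.
by apply: eq_bigr => q _; apply: eq_bigr => x _; rewrite -mulr_sumr sum_Iq_subtree.
Qed.

End BenefitCoverage.

Lemma onem_invn_ge0 (R : numFieldType) n : (0 < n)%N -> 0 <= 1 - n%:R^-1 :> R.
Proof. by move=> n_gt0; rewrite subr_ge0 invf_le1 ?ler1n ?ltr0n. Qed.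

Lemma expr_onem_invn_le_invexpR1 (R : realType) n : (0 < n)%N ->
  (1 - n%:R^-1) ^+ n <= (expR 1)^-1 :> R.
Proof.
move=> n_gt0; have n_neq0 : n%:R != 0 :> R by rewrite pnatr_eq0 -lt0n.
apply: le_trans (_ : expR (- n%:R^-1) ^+ n <= _).
  by rewrite lerXn2r ?nnegrE ?onem_invn_ge0 ?expR_ge0 // expR_ge1Dx.
by rewrite -expRM_natl mulrN mulfV // expRN.
Qed.

Section Greedy.
Variables (R : realType) (V : finType) (f : {set V} -> R).
Hypothesis f_set0_ge0 : 0 <= f set0.
Hypothesis f_mono : forall A B : {set V}, A \subset B -> f A <= f B.
Hypothesis f_marginal_subadd : forall A B : {set V},
  f (A :|: B) - f A <= \sum_(v in B) (f (v |: A) - f A).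
Variables (s : seq V) (S : {set V}).
Hypothesis greedy : greedy_run f s.

Lemma greedy_gap_step p u t : s = p ++ u :: t ->
  f S - f [set x in p] <= #|S|%:R * (f (u |: [set x in p]) - f [set x in p]).
Proof.
move=> /greedy [_ /= best]; set A := [set x in p] in best *.
apply: le_trans (_ : f (A :|: S) - f A <= _); first by rewrite lerD2r f_mono ?subsetUr.
apply: le_trans (f_marginal_subadd A S) _.
rewrite mulr_natl -sumr_const; apply: ler_sum => v _.
have [vA|] := boolP (v \in A); last exact: best.
by rewrite (setUidPr _) ?sub1set // subrr subr_ge0 f_mono ?subsetUr.
Qed.

Hypothesis s_neq0 : (0 < size s)%N.
Hypothesis S_small : (#|S| <= size s)%N.

Let a : R := 1 - (size s)%:R^-1.

Lemma greedy_gap_prefix p t : s = p ++ t -> f S - f [set x in p] <= a ^+ size p * f S.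
Proof.
elim/last_ind: p t => [|p u IH] t s_eq.
  by rewrite set_nil expr0 mul1r lerBlDr lerDl.
have {}s_eq : s = p ++ u :: t by rewrite s_eq cat_rcons.
have -> : [set x in rcons p u] = u |: [set x in p].
  by apply/setP => x; rewrite !inE mem_rcons in_cons.
set A := [set x in p].
have gain_ge0 : 0 <= f (u |: A) - f A by rewrite subr_ge0 f_mono ?subsetUr.
have step : f S - f A <= (size s)%:R * (f (u |: A) - f A).
  by apply: le_trans (greedy_gap_step s_eq) _; rewrite ler_wpM2r ?ler_nat.
rewrite size_rcons exprS -mulrA.
apply: le_trans (_ : a * (f S - f A) <= _); last first.
  by rewrite ler_wpM2l ?onem_invn_ge0 ?(IH _ s_eq).
move: step; rewrite -ler_pdivrMl ?ltr0n // /a; lra.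
Qed.

Lemma greedy_approx : (1 - (expR 1)^-1) * f S <= f [set x in s].
Proof.
have fS_ge0 : 0 <= f S by apply: le_trans f_set0_ge0 (f_mono (sub0set S)).
have gap := greedy_gap_prefix (esym (cats0 s)).
have := ler_wpM2r fS_ge0 (expr_onem_invn_le_invexpR1 R s_neq0).
rewrite -/a; lra.
Qed.

End Greedy.

Theorem theorem3 (R : realType) (V X Q : finType) (r : V) (par : V -> V)
    (var : V -> X) (Z : Q -> {set X}) (P : Q -> R) (c : V -> R) (k : nat)
    (s : seq V) :
  is_rooted_tree r par ->
  (forall x : V, 0 <= c x) ->
  (forall q : Q, 0 <= P q) -> \sum_(q : Q) P q = 1 ->
  (0 < k)%N -> (k <= #|V|)%N ->
  size s = k -> greedy_run (benefit par var Z P c) s ->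
  forall S : {set V}, (#|S| <= k)%N ->
    (1 - (expR 1)^-1) * benefit par var Z P c S
      <= benefit par var Z P c [set x in s].
Proof.
move=> tree c_ge0 P_ge0 _ k_gt0 _ size_s greedy S S_small.
have w_ge0 (i : Q * V) : 0 <= P i.1 * c i.2 by rewrite mulr_ge0.
have BE := benefit_coverage var Z P c tree.
apply: greedy_approx greedy _ _; rewrite ?size_s //.
- by rewrite BE coverage_set0.
- by move=> A B AB; rewrite !BE coverage_mono.
- by move=> A B; under eq_bigr do rewrite BE; rewrite !BE coverage_marginal_subadd.
Qed.
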